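(* Let $G$ be an abelian group, $t$ a positive integer, and $U,V\subset G$ finite sets with $t\leq |V|\leq |U|$. Then \[\sum _{x\in G} \min(1_U*1_V(x), t)\ge t\big(|U|+|V|-t-\alpha(U,V)\big).\]
   Context: For $x\in G$, $1_U*1_V(x)$ is the number of pairs $(u,v)\in U\times V$ with $u+v=x$. For finite $U,V\subset G$, $\alpha(U,V)=\max\{|V'|: V'\subset G,\ |V'|\leq |V|,\ |\langle V'\rangle|\leq |U|+|V|-|V'|\}$, where $\langle V'\rangle$ is the subgroup generated by $V'$. *)

From HB Require Import structures.
From mathcomp Require Import all_boot all_order all_algebra.
From Stdlib Require Import ClassicalEpsilon.
Set Implicit Arguments. Unset Strict Implicit. Unset Printing Implicit Defensive.
Import Order.TTheory GRing.Theory Num.Theory.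
Local Open Scope ring_scope.

(* An abelian group G is a zmodType (possibly infinite).
   A finite subset of G is represented by a duplicate-free sequence. *)

Definition in_gen (G : zmodType) (V' : seq G) (x : G) : Prop :=
  exists c : seq int, x = \sum_(i < size V') V'`_i *~ c`_i.

Definition card_le (G : eqType) (P : G -> Prop) (n : nat) : Prop :=
  exists s : seq G, (size s <= n)%N /\ forall x, P x -> x \in s.

(* 1_U * 1_V (x) = number of pairs (u,v) in U x V with u + v = x. *)
Definition rconv (G : zmodType) (U V : seq G) (x : G) : nat :=
  count (fun p : G * G => p.1 + p.2 == x) [seq (u, v) | u <- U, v <- V].

(* The sumset U + V, outside of which 1_U * 1_V vanishes. *)
Definition sumset (G : zmodType) (U V : seq G) : seq G :=
  undup [seq u + v | u <- U, v <- V].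

Definition alpha_cand (G : zmodType) (U V : seq G) (k : nat) : Prop :=
  exists V' : seq G, [/\ uniq V', size V' = k, (k <= size V)%N &
    card_le (in_gen V') (size U + size V - k)%N].

Definition asbool (P : Prop) : bool :=
  if excluded_middle_informative P then true else false.

Definition alpha (G : zmodType) (U V : seq G) : nat :=
  (\max_(k < (size V).+1 | asbool (alpha_cand U V k)) k)%N.

(* Induction on |V| by e-transforms.  If some translate B = V + e meets U in a nonempty
   proper part X, then r_{U,B} = r_{U ∪ B, X} + r_{U \ B, B \ U}, where |U ∪ B| + |X| = |U| + |V|
   and both X and B \ U are smaller than V.  For t <= |X| the bound for (U ∪ B, X) suffices.
   Otherwise r_{U ∪ B, X} <= |X| is never truncated, so it contributes its whole mass
   |U ∪ B| |X|, and the bound for (U \ B, B \ U) at level t - |X| supplies the rest.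
   If no such translate exists, U + (V - V) is contained in U: then V - v0 generates a subgroup
   of size at most |U|, so alpha(U,V) = |V| and the claim reduces to the trivial bound t |U|. *)

From HB Require Import structures.
From mathcomp Require Import all_boot all_order all_algebra.
From mathcomp Require Import zify.
From Stdlib Require Import ClassicalEpsilon.
Import Order.TTheory GRing.Theory Num.Theory.
Set Implicit Arguments. Unset Strict Implicit. Unset Printing Implicit Defensive.

Lemma sum_nat_of_bool (T : Type) (s : seq T) (a : pred T) :
  \sum_(y <- s) (a y : nat) = count a s.
Proof. by rewrite -sum1_count [RHS]big_mkcond. Qed.

Section Representations.
Variable G : zmodType.
Implicit Types (U V L : seq G) (x e : G).

Definition rep U V x : nat := \sum_(u <- U) \sum_(v <- V) ((u + v)%R == x : nat).

Lemma rconv_rep U V x : rconv U V x = rep U V x.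
Proof.
elim: U => [|u U IH]; first by rewrite /rep big_nil.
rewrite /rconv allpairs_cons count_cat -/(rconv U V x) IH /rep big_cons.
by rewrite count_map sum_nat_of_bool.
Qed.

Lemma rep_catl U1 U2 V x : rep (U1 ++ U2) V x = rep U1 V x + rep U2 V x.
Proof. exact: big_cat. Qed.

Lemma rep_catr U V1 V2 x : rep U (V1 ++ V2) x = rep U V1 x + rep U V2 x.
Proof. by rewrite /rep -big_split; apply: eq_bigr => u _; rewrite big_cat. Qed.

Lemma repC U V x : rep U V x = rep V U x.
Proof.
rewrite /rep exchange_big; apply: eq_bigr => v _; apply: eq_bigr => u _.
by rewrite addrC.
Qed.

Lemma perm_repl U1 U2 V x : perm_eq U1 U2 -> rep U1 V x = rep U2 V x.
Proof. exact: perm_big. Qed.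

Lemma perm_repr U V1 V2 x : perm_eq V1 V2 -> rep U V1 x = rep U V2 x.
Proof. by move=> pV; rewrite repC (perm_repl _ _ pV) repC. Qed.

(* For each [v] at most one [u] of the duplicate-free [U] has [u + v = x]. *)
Lemma rep_le_size U V x : uniq U -> rep U V x <= size V.
Proof.
move=> uU; rewrite repC /rep -sum1_size; apply: leq_sum => v _.
rewrite sum_nat_of_bool -(count_map (fun u => v + u)%R (pred1 x)).
by rewrite count_uniq_mem ?leq_b1 // map_inj_uniq //; apply: addrI.
Qed.

Definition covers L U V := forall u v, u \in U -> v \in V -> (u + v)%R \in L.

Lemma sum_rep L U V : uniq L -> covers L U V -> \sum_(x <- L) rep U V x = size U * size V.
Proof.
move=> uL cov; rewrite /rep exchange_big /= -sum1_size big_distrl /= !big_seq.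
apply: eq_bigr => u uU; rewrite exchange_big /= -sum1_size mul1n !big_seq.
apply: eq_bigr => v vV; rewrite sum_nat_of_bool.
by rewrite (eq_count (a2 := pred1 (u + v)%R)) ?count_uniq_mem ?cov // => y; rewrite /= eq_sym.
Qed.

Definition translate e V := [seq (v + e)%R | v <- V].

Lemma rep_translate U V e x : rep U (translate e V) (x + e)%R = rep U V x.
Proof.
apply: eq_bigr => u _; rewrite big_map; apply: eq_bigr => v _.
by rewrite addrA (inj_eq (addIr e)).
Qed.

Lemma covers_translate L U V e :
  covers L U V -> covers (map (fun x => x + e)%R L) U (translate e V).
Proof. by move=> cov u _ uU /mapP[v vV ->]; rewrite addrA (map_f (fun x => x + e)%R) ?cov. Qed.

End Representations.

Section Alpha.
Variable G : zmodType.
Implicit Types U V : seq G.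

Lemma asboolP (P : Prop) : reflect P (asbool P).
Proof. by rewrite /asbool; case: excluded_middle_informative => h; constructor. Qed.

Lemma alpha_le_size U V : alpha U V <= size V.
Proof. by apply/bigmax_leqP => k _; rewrite -ltnS. Qed.

(* [alpha U V] only depends on [size U] and [size V]. *)
Lemma alpha_mono U V U' V' :
  size U' + size V' <= size U + size V -> size V' <= size V -> alpha U' V' <= alpha U V.
Proof.
move=> leUV leV; apply/bigmax_leqP => k /asboolP[W [uW sW kV' [s [ss hs]]]].
have kV : k < (size V).+1 by rewrite ltnS (leq_trans kV').
apply: (leq_bigmax_cond (F := fun i : 'I_(size V).+1 => nat_of_ord i) (Ordinal kV)).
apply/asboolP; exists W; split => //; exists s; split => //.
by rewrite (leq_trans ss) ?leq_sub2r.
Qed.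

Definition stable U (w : G) := forall u, u \in U -> (u + w)%R \in U.

Lemma stable0 U : stable U 0.
Proof. by move=> u; rewrite addr0. Qed.

Lemma stableD U w1 w2 : stable U w1 -> stable U w2 -> stable U (w1 + w2).
Proof. by move=> h1 h2 u uU; rewrite addrA h2 ?h1. Qed.

Lemma stableMn U w n : stable U w -> stable U (w *+ n).
Proof.
move=> hw; elim: n => [|n IH]; first exact: stable0.
by rewrite mulrS; apply: stableD.
Qed.

Lemma stableMz U w z : stable U w -> stable U (- w) -> stable U (w *~ z).
Proof.
move=> hw hNw; case: z => n; first exact: stableMn.
by rewrite NegzE mulrNz -mulNrn; apply: stableMn.
Qed.

(* The subgroup generated by [V - v0] is contained in [U - u0]. *)
Lemma alpha_full U V : uniq V -> 0 < size V <= size U ->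
  {in V &, forall v v', stable U (v' - v)} ->
  alpha U V = size V.
Proof.
case: V => [//|v0 V] uV /andP[_ leVU] closed; apply/eqP; rewrite eqn_leq alpha_le_size /=.
case: U leVU closed => [//|u0 U] _ closed.
apply: (leq_bigmax_cond (F := fun i : 'I_(size V).+2 => nat_of_ord i) ord_max).
apply/asboolP; exists [seq (v - v0)%R | v <- v0 :: V]; split.
- by rewrite map_inj_uniq //; apply: addIr.
- by rewrite size_map.
- by [].
exists [seq (u - u0)%R | u <- u0 :: U]; split; first by rewrite size_map addnK.
move=> x [c ->]; set y := (\sum_(_ < _) _)%R.
have sy : stable (u0 :: U) y.
  apply: big_ind => [|w1 w2|i _]; [exact: stable0 | exact: stableD |].
  have /mapP[v vV ->] := mem_nth 0%R (ltn_ord i).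
  by apply: stableMz; rewrite ?opprB; apply: closed; rewrite ?mem_head.
apply/mapP; exists (u0 + y)%R; first by rewrite sy ?mem_head.
by rewrite addrC addKr.
Qed.

End Alpha.

Section MassBound.
Variable G : zmodType.
Implicit Types (U V L : seq G) (e : G).

(* Quantifying over every duplicate-free [L] containing [U + V] lets the bound be
   transported along translations and shared by the pairs of an e-transform. *)
Definition mass_bound t U V := forall L, uniq L -> covers L U V ->
  t * (size U + size V - (t + alpha U V)) <= \sum_(x <- L) minn (rep U V x) t.

Lemma mass_bound_translate t U V e : mass_bound t U (translate e V) -> mass_bound t U V.
Proof.
move=> hB L uL cov.
have uLe : uniq (map (fun x => x + e)%R L) by rewrite map_inj_uniq //; apply: addIr.
have aB : alpha U (translate e V) = alpha U V.
  by apply/eqP; rewrite eqn_leq !alpha_mono ?size_map.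
have := hB _ uLe (covers_translate cov); rewrite big_map aB size_map.
by under eq_bigr do rewrite rep_translate.
Qed.

Lemma sum_minn_rep L U V t : uniq U -> uniq L -> covers L U V -> t <= size V ->
  size U * t <= \sum_(x <- L) minn (rep U V x) t.
Proof.
move=> uU uL cov leV; have st : size (take t V) = t by rewrite size_takel.
rewrite -{1}st -(@sum_rep _ L) //; last by move=> u v uU' /mem_take; apply: cov.
apply: leq_sum => x _; rewrite -[X in minn (rep _ X _) _](cat_take_drop t V) rep_catr.
by rewrite leq_min leq_addr -{2}st rep_le_size.
Qed.

Lemma mass_bound_full t U V : uniq U -> uniq V -> 0 < size V <= size U -> t <= size V ->
  {in V &, forall v v', stable U (v' - v)} ->
  mass_bound t U V.
Proof.
move=> uU uV leVU leV closed L uL cov; rewrite alpha_full //.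
apply: leq_trans (sum_minn_rep uU uL cov leV).
by rewrite mulnC leq_mul2r subnDr leq_subr orbT.
Qed.

Definition seqI U V : seq G := [seq y <- U | y \in V].
Definition seqD U V : seq G := [seq y <- U | y \notin V].

Lemma full_translates_stable U V : uniq U ->
  (forall e, 0 < size (seqI U (translate e V)) -> size V <= size (seqI U (translate e V))) ->
  {in V &, forall v v', stable U (v' - v)}.
Proof.
move=> uU full v v' vV v'V u uU'; set e := (u - v)%R.
have ue : u \in translate e V by apply/mapP; exists v; rewrite // addrC subrK.
have /full : 0 < size (seqI U (translate e V)).
  by rewrite size_filter -has_count; apply/hasP; exists u.
rewrite -(size_map (fun v => v + e)%R V) => le_size.
have sub : {subset seqI U (translate e V) <= translate e V}.
  by move=> y; rewrite mem_filter => /andP[].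
have [_ eqU] := uniq_min_size (filter_uniq _ uU) sub le_size.
have : (v' + e)%R \in seqI U (translate e V) by rewrite eqU (map_f (fun w => w + e)%R).
by rewrite mem_filter addrCA => /andP[].
Qed.

(* The rest case below, with [s = size (seqI U B)], [size U = s + a], [size B = s + b]. *)
Lemma rest_arith (s t a b al al' : nat) : s < t -> al' <= al ->
  t * (s + a + (s + b) - (t + al)) <= (s + a + b) * s + (t - s) * (a + b - (t - s + al')).
Proof.
move=> lt_st le_al; have [t' ->] : exists t', t = s + t' by exists (t - s); lia.
rewrite addKn; nia.
Qed.

Section ETransform.
Variables U B : seq G.
Hypotheses (uU : uniq U) (uB : uniq B).

Local Notation X := (seqI U B).
Local Notation A := (seqD U B).
Local Notation B' := (seqD B U).
Local Notation Y := (U ++ seqD B U).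

Let permU : perm_eq U (X ++ A).
Proof. by rewrite perm_sym perm_filterC. Qed.

Let permB : perm_eq B (X ++ B').
Proof.
apply: perm_trans (_ : perm_eq _ (seqI B U ++ B')) _.
  by rewrite perm_sym perm_filterC.
by rewrite perm_cat2r uniq_perm ?filter_uniq // => y; rewrite !mem_filter andbC.
Qed.

Lemma size_etransformU : size X + size A = size U.
Proof. by rewrite -size_cat (perm_size permU). Qed.

Lemma size_etransformB : size X + size B' = size B.
Proof. by rewrite -size_cat (perm_size permB). Qed.

Lemma uniq_etransform : uniq Y.
Proof.
rewrite cat_uniq uU filter_uniq // andbT.
by apply/hasPn => y; rewrite mem_filter => /andP[].
Qed.

Lemma rep_etransform x : rep U B x = rep Y X x + rep A B' x.
Proof.
rewrite rep_catl (perm_repl _ _ permU) (perm_repl _ _ permU) (perm_repr _ _ permB).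
by rewrite !rep_catl !rep_catr (repC B'); lia.
Qed.

Lemma covers_etransform L : covers L U B -> covers L Y X /\ covers L A B'.
Proof.
move=> cov; split => u v; last by rewrite !mem_filter => /andP[_ uU'] /andP[_ vB]; apply: cov.
rewrite mem_cat !mem_filter => /orP[uU' /andP[vB _] | /andP[_ uB'] /andP[_ vU]].
  exact: cov.
by rewrite addrC; apply: cov.
Qed.

Lemma mass_bound_common t : t <= size X -> mass_bound t Y X -> mass_bound t U B.
Proof.
move=> leX hYX L uL /covers_etransform[covYX _].
have sYX : size Y + size X = size U + size B.
  by rewrite size_cat -addnA [size B' + _]addnC size_etransformB.
have aYX : alpha Y X <= alpha U B.
  by rewrite alpha_mono ?sYX // -size_etransformB leq_addr.
apply: leq_trans (_ : _ <= t * (size Y + size X - (t + alpha Y X))) _.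
  by rewrite leq_mul2l sYX leq_sub2l ?leq_add2l ?orbT.
apply: leq_trans (hYX L uL covYX) _; apply: leq_sum => x _.
by rewrite rep_etransform; lia.
Qed.

Lemma mass_bound_rest t :
  size X < t -> mass_bound (t - size X) A B' -> mass_bound t U B.
Proof.
move=> ltX hAB L uL /covers_etransform[covYX covAB].
have hsum : \sum_(x <- L) rep Y X x + \sum_(x <- L) minn (rep A B' x) (t - size X)
    <= \sum_(x <- L) minn (rep U B x) t.
  rewrite -big_split; apply: leq_sum => x _ /=; rewrite rep_etransform leq_min leq_add2l geq_minl.
  by rewrite (leq_trans (leq_add (rep_le_size X x uniq_etransform) (geq_minr _ _))) // subnKC // ltnW.
have leA : size A <= size U by rewrite -size_etransformU leq_addl.
have leB' : size B' <= size B by rewrite -size_etransformB leq_addl.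
have aAB : alpha A B' <= alpha U B by rewrite alpha_mono ?leq_add.
rewrite sum_rep // size_cat -size_etransformU in hsum.
rewrite -size_etransformU -size_etransformB.
apply: leq_trans (rest_arith _ _ ltX aAB) (leq_trans _ hsum).
by rewrite leq_add2l hAB.
Qed.

End ETransform.

Lemma mass_bound_holds t U V : 0 < t -> uniq U -> uniq V -> t <= size V <= size U ->
  mass_bound t U V.
Proof.
have [n] := ubnP (size V); elim: n t U V => // n IH t U V /ltnSE leVn t_gt0 uU uV /andP[leV leVU].
have [[e /andP[X_gt0 X_lt]] | none] :=
  classic (exists e, 0 < size (seqI U (translate e V)) < size V); last first.
  apply: mass_bound_full => //; first by rewrite (leq_trans t_gt0).
  apply: full_translates_stable => // e X_gt0; rewrite leqNgt; apply/negP => lt.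
  by apply: none; exists e; rewrite X_gt0.
apply: (@mass_bound_translate t U V e); set B := translate e V in X_gt0 X_lt *.
have uB : uniq B by rewrite map_inj_uniq //; apply: addIr.
have sB : size B = size V by rewrite size_map.
have sXU := size_etransformU U B; have sXB := size_etransformB uU uB; rewrite sB in sXB.
have [leX | ltX] := leqP t (size (seqI U B)).
  apply: (mass_bound_common uU uB leX); apply: IH; rewrite ?filter_uniq ?uniq_etransform //.
    exact: leq_trans X_lt leVn.
  by rewrite leX size_cat -sXU -addnA leq_addr.
apply: (mass_bound_rest uU uB ltX); apply: IH; rewrite ?filter_uniq ?subn_gt0 //.
  by move: leVn X_gt0 sXB; lia.
by move: leVU sXU sXB; lia.
Qed.

End MassBound.

Local Open Scope ring_scope.

Theorem theorem3p2 (G : zmodType) (t : nat) (U V : seq G) :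
  (0 < t)%N -> uniq U -> uniq V -> (t <= size V)%N -> (size V <= size U)%N ->
  ((\sum_(x <- sumset U V) minn (rconv U V x) t)%N)%:Z >=
    t%:Z * ((size U)%:Z + (size V)%:Z - t%:Z - (alpha U V)%:Z).
Proof.
move=> t_gt0 uU uV leV leVU.
have cov : covers (sumset U V) U V by move=> u v uU' vV; rewrite mem_undup allpairs_f.
under eq_bigr do rewrite rconv_rep.
have -> : (size U)%:Z + (size V)%:Z - t%:Z - (alpha U V)%:Z =
          (size U + size V - (t + alpha U V))%N.
  by have := alpha_le_size U V; lia.
by rewrite -PoszM lez_nat; apply: mass_bound_holds; rewrite ?leV ?undup_uniq.
Qed.
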